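(* Let $T_1,T_2$ be rooted trees on leaf set $[n]$. The following three numbers are equal: (1) the dimension of the cone $K_{T_1}+K_{T_2}\subseteq\mathbb{R}^{\binom{[n]}{2}}$; (2) the rank of the graphic matroid of the clade graph $G_{T_1,T_2}$, i.e. its number of vertices minus its number of connected components; (3) the cardinality $|\mathrm{clade}(T_1)\cup\mathrm{clade}(T_2)|$.
   Context: A rooted tree on leaf set $[n]$ has leaves labeled bijectively by $[n]$ and internal vertices each with at least two children. A clade of $T$ is the set of leaves below an internal vertex; $\mathrm{clade}(T)$ is the set of clades (including $[n]$). For $S\subseteq[n]$, $c_T(S)$ denotes the smallest clade of $T$ containing $S$. The clade graph $G_{T_1,T_2}$ is the bipartite multigraph whose vertex set is the disjoint union of $\mathrm{clade}(T_1)$ and $\mathrm{clade}(T_2)$ and which has, for each pair $1\le i<j\le n$, an edge $e_{ij}$ joining $c_{T_1}(\{i,j\})$ to $c_{T_2}(\{i,j\})$. An ultrametric is $\delta\in\mathbb{R}^{\binom{[n]}{2}}$ with $\delta_{uv}\le\max\{\delta_{uw},\delta_{vw}\}$ for all distinct $u,v,w$. $K_T$ is the closed cone of ultrametrics with topology $T$: the set of $\delta$ such that there are real weights on the internal vertices of $T$, weakly increasing along every path toward the root, with $\delta_{uv}$ equal to the weight of the most recent common ancestor (internal vertex on the $u$–$v$ path closest to the root) of $u$ and $v$. $K_{T_1}+K_{T_2}$ is the Minkowski sum. *)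

From HB Require Import structures.
From mathcomp Require Import all_boot all_order all_algebra.
From mathcomp Require Import reals.
Set Implicit Arguments. Unset Strict Implicit. Unset Printing Implicit Defensive.
Import Order.TTheory GRing.Theory Num.Theory.
Local Open Scope ring_scope.

(* Index set of R^{binom [n] 2}: pairs (i,j) with i < j. *)
Definition lpair (n : nat) := {p : 'I_n * 'I_n | (p.1 < p.2)%N}.

Definition dissim (R : realType) (n : nat) := {ffun lpair n -> R^o}.

(* A rooted tree on leaf set [n] (internal vertices with >= 2 children) is
   encoded by its set of clades: a hierarchy on [n] containing [n], all of
   whose members have at least two elements, and any two of which are
   nested or disjoint.  This is in bijection with such trees. *)
Definition is_rooted_tree (n : nat) (H : {set {set 'I_n}}) : Prop :=
  [/\ [set: 'I_n] \in H,
      (forall C, C \in H -> 2 <= #|C|)%N &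
      (forall A B, A \in H -> B \in H ->
         [\/ A \subset B, B \subset A | [disjoint A & B]])].

(* c_T(S): the smallest clade of T containing S (the intersection of all
   clades containing S, which is a clade since [n] is one and clades are
   laminar). *)
Definition cladeof (n : nat) (H : {set {set 'I_n}}) (S : {set 'I_n}) :
  {set 'I_n} := \bigcap_(C in H | S \subset C) C.

Definition pair_set (n : nat) (p : lpair n) : {set 'I_n} :=
  [set (val p).1; (val p).2].

(* K_T: ultrametrics with topology T.  delta is in K_T iff there are real
   weights w on the internal vertices (= clades), weakly increasing toward
   the root (i.e. monotone w.r.t. inclusion of clades), with delta_{uv} equal
   to the weight of the mrca of u and v, i.e. of c_T({u,v}). *)
Definition K_T (R : realType) (n : nat) (H : {set {set 'I_n}}) :
  dissim R n -> Prop :=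
  fun delta => exists w : {set 'I_n} -> R,
    (forall A B, A \in H -> B \in H -> A \subset B -> w A <= w B) /\
    (forall p : lpair n, delta p = w (cladeof H (pair_set p))).

Definition minkowski_sum (R : realType) (n : nat) (K1 K2 : dissim R n -> Prop) :
  dissim R n -> Prop :=
  fun d => exists a b, [/\ K1 a, K2 b & d = a + b].

(* Dimension of (the linear span of) a subset S of a finite-dimensional
   vector space: S has dimension d iff some finite family s of elements of S
   spans S and \dim <<s>> = d.  (For a cone containing 0 this is the
   dimension of its affine hull.) *)
Definition has_dim (R : realType) (n : nat) (S : dissim R n -> Prop) (d : nat) : Prop :=
  exists s : seq (dissim R n),
    [/\ (forall v, v \in s -> S v),
        (forall v, S v -> v \in <<s>>%VS) &
        \dim <<s>>%VS = d].

(* The clade graph G_{T1,T2}: vertices are inl C (C a clade of T1) and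
   inr C (C a clade of T2); for every pair i<j there is an edge e_ij from
   inl c_T1({i,j}) to inr c_T2({i,j}).  Multiplicities do not affect the
   connected components, so we record the (symmetric) adjacency relation. *)
Definition cg_vertex (n : nat) := ({set 'I_n} + {set 'I_n})%type.

Definition cg_vertices (n : nat) (H1 H2 : {set {set 'I_n}}) : {set cg_vertex n} :=
  [set inl C | C in H1] :|: [set inr C | C in H2].

Definition cg_adj (n : nat) (H1 H2 : {set {set 'I_n}}) : rel (cg_vertex n) :=
  fun x y => [exists p : lpair n,
    ((x == inl (cladeof H1 (pair_set p))) && (y == inr (cladeof H2 (pair_set p))))
    || ((x == inr (cladeof H2 (pair_set p))) && (y == inl (cladeof H1 (pair_set p))))].

Definition clade_graph_rank (n : nat) (H1 H2 : {set {set 'I_n}}) : nat :=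
  (#|cg_vertices H1 H2| - n_comp (cg_adj H1 H2) (mem (cg_vertices H1 H2)))%N.

From mathcomp Require Import all_boot all_algebra.
From mathcomp Require Import reals.
Set Implicit Arguments. Unset Strict Implicit. Unset Printing Implicit Defensive.
Import GRing.Theory Num.Theory.

(* For a set A of at least two leaves, the maximal clades of T1 not containing A
   cut A into proper blocks, and so do those of T2; two such partial partitions of A always leave a
   pair {i, j} of A separated by both.  Hence every clade of T1 or T2 containing
   i and j contains A, so c_Tk({i, j}) = c_Tk(A).

   With A a clade of T1 (or T2) this pair is an edge joining A to c_T2(A) (or to
   c_T1(A)).  Alternating between the trees thus climbs strictly until a common
   clade is reached, while the vertices below a common clade form a union of
   components; so the components correspond to clade(T1) ∩ clade(T2), and the
   rank is |clade(T1)| + |clade(T2)| - |clade(T1) ∩ clade(T2)|.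

   On the cone side, -[{i,j} ⊆ C] lies in K_T for every clade C, and these vectors
   for C in clade(T) span the same space as the indicators [c_T({i,j}) = C] that
   span K_T.  For C in clade(T1) ∪ clade(T2) they are independent: evaluate a
   vanishing combination at the pair of a largest clade with nonzero coefficient. *)

Lemma n_comp_transversal (T : finType) (e : rel T) (a : {pred T}) (r : {set T}) :
    connect_sym e -> closed e a -> {subset r <= a} ->
    {in a, forall x, exists2 y, y \in r & connect e x y} ->
    {in r &, forall x y, connect e x y -> x = y} ->
  n_comp e a = #|r|.
Proof.
move=> sym_e cl_a sub_ra cover r_uniq.
have root_inj : {in r &, injective (fingraph.root e)}.
  by move=> x y xr yr /(fingraph.rootP sym_e); apply: r_uniq.
rewrite /n_comp_mem -(card_in_imset root_inj); apply: eq_card => z.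
rewrite inE; apply/andP/imsetP => [[/eqP rz az] | [x xr ->]].
- by have [x xr zx] := cover z az; exists x; rewrite // -rz; apply/(fingraph.rootP sym_e).
- split; first exact: roots_root.
  change (fingraph.root e x \in a).
  by rewrite -(closed_connect cl_a (connect_root e x)) sub_ra.
Qed.

Lemma perm_enum_setD1 (T : finType) (A : {set T}) x :
  x \in A -> perm_eq (enum A) (x :: enum (A :\ x)).
Proof.
move=> Ax; apply: uniq_perm; rewrite /= ?enum_uniq ?mem_enum ?setD11 // => y.
by rewrite in_cons !mem_enum in_setD1; case: eqVneq => // ->.
Qed.

Lemma span_ffun_eq0 (K : fieldType) (I : finType) (X : seq {ffun I -> K^o}) (i : I)
    (v : {ffun I -> K^o}) :
  {in X, forall x : {ffun I -> K^o}, x i = 0%R} -> v \in <<X>>%VS -> v i = 0%R.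
Proof.
move=> X0; rewrite -[X]in_tupleE => /coord_span ->; rewrite sum_ffunE big1 // => j _.
by rewrite ffunE X0 ?scaler0 //; apply: mem_nth.
Qed.

Section Laminar.
Variable n : nat.
Implicit Types (H F : {set {set 'I_n}}) (A B C D S : {set 'I_n}) (x y z : 'I_n).

Definition laminar H := forall A B, A \in H -> B \in H ->
  [\/ A \subset B, B \subset A | [disjoint A & B]].

(* [joined H A] relates the points of A lying in a common member of H not
   containing A; its classes are the blocks of A cut out by H. *)
Definition joined H A x y := [exists D in H, [&& x \in D, y \in D & ~~ (A \subset D)]].

Definition pins F C S := S \subset C /\ forall D, D \in F -> S \subset D -> C \subset D.

Lemma joinedC H A x y : joined H A x y = joined H A y x.
Proof. by apply: eq_existsb => D; rewrite [in X in _ && X]andbCA. Qed.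

Lemma joinedU H1 H2 A x y :
  joined (H1 :|: H2) A x y = joined H1 A x y || joined H2 A x y.
Proof.
apply/exists_inP/orP => [[D] | [] /exists_inP[D HD xyD]]; last 2 first.
- by exists D; rewrite // inE HD.
- by exists D; rewrite // inE HD orbT.
by rewrite inE => /orP[] HD xyD; [left|right]; apply/exists_inP; exists D.
Qed.

Lemma joined_trans H A y x z :
  laminar H -> joined H A x y -> joined H A y z -> joined H A x z.
Proof.
move=> lamH /exists_inP[D HD /and3P[xD yD AD]] /exists_inP[D' HD' /and3P[yD' zD' AD']].
apply/exists_inP; case: (lamH D D' HD HD') => [sDD'|sD'D|dDD'].
- by exists D'; rewrite // (subsetP sDD') ?zD'.
- by exists D; rewrite // xD (subsetP sD'D) ?AD.
- by rewrite (disjointFr dDD' yD) in yD'.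
Qed.

Lemma exists_unjoined H A x : laminar H -> x \in A -> 1 < #|A| ->
  exists2 y, y \in A & (y != x) && ~~ joined H A x y.
Proof.
move=> lamH xA A_gt1.
have [y /and3P[yA yx nj] | all_joined] :=
  pickP [pred y | [&& y \in A, y != x & ~~ joined H A x y]].
  by exists y => //; rewrite yx.
have [y0 /setD1P[y0x y0A]] : exists y0, y0 \in A :\ x.
  by apply/card_gt0P; move: A_gt1; rewrite (cardsD1 x) xA.
pose F := [set D in H | (x \in D) && ~~ (A \subset D)].
have joinedF y : y \in A -> y != x -> exists2 D, D \in F & y \in D.
  move=> yA yx; have /exists_inP[D HD /and3P[xD yD AD]] : joined H A x y.
    by apply: contraFT (all_joined y) => nj; rewrite /= yA yx.
  by exists D; rewrite // inE HD xD.
have [D0 FD0 _] := joinedF y0 y0A y0x.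
have [Dm FDm maxDm] := arg_maxnP (fun D => #|D|) FD0.
have := FDm : Dm \in F; rewrite inE => /and3P[HDm xDm /negP[]].
apply/subsetP => y yA; have [-> // | yx] := eqVneq y x.
have [D FD yD] := joinedF y yA yx; move: (FD); rewrite inE => /and3P[HD xD _].
case: (lamH D Dm HD HDm) => [/subsetP-> // | sDmD | dDDm].
- by have /eqP-> : Dm == D by rewrite eqEcard sDmD; apply: maxDm.
- by rewrite (disjointFr dDDm xD) in xDm.
Qed.

Lemma exists_unjoined_pair H1 H2 A : laminar H1 -> laminar H2 -> 1 < #|A| ->
  exists x y, [/\ x \in A, y \in A, x != y & ~~ joined (H1 :|: H2) A x y].
Proof.
move=> lam1 lam2 A_gt1.
have [x xA] : exists x, x \in A by apply/card_gt0P; apply: ltnW.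
have [y1 y1A /andP[y1x nj1]] := exists_unjoined lam1 xA A_gt1.
have [y2 y2A /andP[y2x nj2]] := exists_unjoined lam2 xA A_gt1.
have [j21 | nj21] := boolP (joined H2 A x y1); last first.
  by exists x, y1; rewrite joinedU negb_or nj1 nj21 eq_sym.
have [j12 | nj12] := boolP (joined H1 A x y2); last first.
  by exists x, y2; rewrite joinedU negb_or nj2 nj12 eq_sym.
exists y1, y2; split => //; first by apply: contraNneq nj1 => ->.
rewrite joinedU negb_or; apply/andP; split.
- by apply: contra nj1 => j; apply: joined_trans lam1 j12 _; rewrite joinedC.
- by apply: contra nj2 => j; apply: joined_trans lam2 j21 j.
Qed.

Lemma unjoined_pins F A x y :
  x \in A -> y \in A -> ~~ joined F A x y -> pins F A [set x; y].
Proof.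
move=> xA yA nj; split=> [|D FD]; rewrite subUset !sub1set ?xA ?yA // => /andP[xD yD].
by apply: contraNT nj => AD; apply/exists_inP; exists D; rewrite // xD yD.
Qed.

Lemma exists_lpair x y : x != y -> exists p : lpair n, pair_set p = [set x; y].
Proof.
case: (ltngtP x y) => [lt_xy | lt_yx | /val_inj->]; last by rewrite eqxx.
- by exists (exist _ (x, y) lt_xy).
- by exists (exist _ (y, x) lt_yx); rewrite /pair_set setUC.
Qed.

Lemma exists_pinning_pair H1 H2 A : laminar H1 -> laminar H2 -> 1 < #|A| ->
  exists p : lpair n, pins (H1 :|: H2) A (pair_set p).
Proof.
move=> lam1 lam2 /(exists_unjoined_pair lam1 lam2)[x [y [xA yA xy nj]]].
by have [p pE] := exists_lpair xy; exists p; rewrite pE; apply: unjoined_pins.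
Qed.
End Laminar.

Section Cladeof.
Variable n : nat.
Implicit Types (H F : {set {set 'I_n}}) (A C D S : {set 'I_n}).

Lemma rooted_tree_laminar H : is_rooted_tree H -> laminar H.
Proof. by case. Qed.

Lemma clade_card_gt1 H C : is_rooted_tree H -> C \in H -> 1 < #|C|.
Proof. by case=> _ + _ => /[apply]. Qed.

Lemma clade_neq0 H C : is_rooted_tree H -> C \in H -> C != set0.
Proof.
by move=> tH /(clade_card_gt1 tH) C_gt1; rewrite -card_gt0 (ltnW C_gt1).
Qed.

Lemma pair_set_neq0 (p : lpair n) : pair_set p != set0.
Proof. by apply/set0Pn; exists (val p).1; rewrite !inE eqxx. Qed.

Lemma sub_cladeof H S : S \subset cladeof H S.
Proof. by apply/bigcapsP => C /andP[]. Qed.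

Lemma cladeof_subE H S C : C \in H -> (cladeof H S \subset C) = (S \subset C).
Proof.
move=> HC; apply/idP/idP => [|SC]; first exact: subset_trans (sub_cladeof H S).
by apply: bigcap_inf; rewrite HC.
Qed.

Lemma cladeof_id H C : C \in H -> cladeof H C = C.
Proof.
by move=> HC; apply/eqP; rewrite eqEsubset cladeof_subE // subxx sub_cladeof.
Qed.

Lemma cladeof_pinned F H C S : H \subset F -> pins F C S -> cladeof H S = cladeof H C.
Proof.
move=> sHF [SC pinC]; apply: eq_bigl => D; case HD: (D \in H) => //=.
by apply/idP/idP => [|/(subset_trans SC)//]; apply: pinC; rewrite (subsetP sHF).
Qed.

Lemma cladeof_in H S : is_rooted_tree H -> S != set0 -> cladeof H S \in H.
Proof.
case=> HT _ lamH /set0Pn[x xS].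
pose F := [set C in H | S \subset C].
have FT : [set: 'I_n] \in F by rewrite inE HT subsetT.
have [Cm FCm minCm] := arg_minnP (fun C => #|C|) FT.
have := FCm : Cm \in F; rewrite inE => /andP[HCm SCm].
suff -> : cladeof H S = Cm by [].
apply/eqP; rewrite eqEsubset cladeof_subE // SCm; apply/bigcapsP => D /andP[HD SD].
have FD : D \in F by rewrite inE HD SD.
case: (lamH Cm D HCm HD) => [// | sDCm | dCmD].
- by have /eqP-> : D == Cm by rewrite eqEcard sDCm (minCm D FD).
- by have := subsetP SD x xS; rewrite (disjointFr dCmD (subsetP SCm x xS)).
Qed.

Lemma proper_cladeof H A :
  is_rooted_tree H -> A != set0 -> A \notin H -> A \proper cladeof H A.
Proof.
move=> tH A0 AH; rewrite properEneq sub_cladeof andbT.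
by apply: contraNneq AH => ->; apply: cladeof_in.
Qed.
End Cladeof.

Section CladeGraph.
Variables (n : nat) (H1 H2 : {set {set 'I_n}}).
Hypotheses (t1 : is_rooted_tree H1) (t2 : is_rooted_tree H2).
Local Notation e := (cg_adj H1 H2).
Local Notation V := (cg_vertices H1 H2).

Definition cg_clade (v : cg_vertex n) : {set 'I_n} := match v with inl C | inr C => C end.

Lemma cg_adj_sym : symmetric e.
Proof. by move=> x y; apply: eq_existsb => p; rewrite orbC; congr (_ || _); apply: andbC. Qed.

Lemma mem_cg_vertices_inl C : (inl C \in V) = (C \in H1).
Proof. by rewrite inE (mem_imset _ _ inl_inj) orb_idr // => /imsetP[? _ []]. Qed.

Lemma mem_cg_vertices_inr C : (inr C \in V) = (C \in H2).
Proof. by rewrite inE (mem_imset _ _ inr_inj) orb_idl // => /imsetP[? _ []]. Qed.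

Lemma cg_adj_pinned (S : {set 'I_n}) : 1 < #|S| -> e (inl (cladeof H1 S)) (inr (cladeof H2 S)).
Proof.
move=> /(exists_pinning_pair (rooted_tree_laminar t1) (rooted_tree_laminar t2))[p pinS].
apply/existsP; exists p.
by rewrite (cladeof_pinned (subsetUl H1 H2) pinS) (cladeof_pinned (subsetUr H1 H2) pinS) !eqxx.
Qed.

Lemma cg_adj_clade1 A : A \in H1 -> e (inl A) (inr (cladeof H2 A)).
Proof. by move=> HA; rewrite -{1}(cladeof_id HA) cg_adj_pinned ?(clade_card_gt1 t1). Qed.

Lemma cg_adj_clade2 B : B \in H2 -> e (inr B) (inl (cladeof H1 B)).
Proof.
by move=> HB; rewrite cg_adj_sym -{2}(cladeof_id HB) cg_adj_pinned ?(clade_card_gt1 t2).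
Qed.

Lemma cg_vertices_closed : closed e V.
Proof.
move=> x y /existsP[p /orP[] /andP[/eqP-> /eqP->]];
  by rewrite mem_cg_vertices_inl mem_cg_vertices_inr !cladeof_in ?pair_set_neq0.
Qed.

Lemma cg_adj_below C : C \in H1 :&: H2 -> closed e [pred v | cg_clade v \subset C].
Proof.
rewrite inE => /andP[C1 C2] x y /existsP[p /orP[] /andP[/eqP-> /eqP->]] /=;
  by rewrite !inE /= !cladeof_subE.
Qed.

Lemma connect_inl_common v :
  cg_clade v \in H1 :&: H2 -> connect e v (inl (cg_clade v)).
Proof.
case: v => C /=; rewrite ?connect0 // inE => /andP[C1 C2].
by apply: connect1; rewrite -{2}(cladeof_id C1) cg_adj_clade2.
Qed.

Lemma exists_larger_neighbor v : v \in V -> cg_clade v \notin H1 :&: H2 ->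
  exists2 w, w \in V & e v w && (cg_clade v \proper cg_clade w).
Proof.
case: v => C /=; rewrite ?mem_cg_vertices_inl ?mem_cg_vertices_inr inE => HC;
  rewrite HC ?andbT /= => nHC.
- have C0 := clade_neq0 t1 HC.
  exists (inr (cladeof H2 C)); first by rewrite mem_cg_vertices_inr cladeof_in.
  by rewrite cg_adj_clade1 //= proper_cladeof.
- have C0 := clade_neq0 t2 HC.
  exists (inl (cladeof H1 C)); first by rewrite mem_cg_vertices_inl cladeof_in.
  by rewrite cg_adj_clade2 //= proper_cladeof.
Qed.

Lemma connect_common_clade v : v \in V -> exists2 C, C \in H1 :&: H2 & connect e v (inl C).
Proof.
have [m lt_v_m] := ubnP #|~: cg_clade v|; elim: m v lt_v_m => // m IH v lt_v_m vV.
have [common | /(exists_larger_neighbor vV)[w wV /andP[e_vw lt_vw]]] :=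
  boolP (cg_clade v \in H1 :&: H2); first by exists (cg_clade v); rewrite ?connect_inl_common.
have [|C HC wC] := IH w _ wV; last by exists C => //; apply: connect_trans (connect1 e_vw) wC.
by rewrite ltnS in lt_v_m; apply: leq_trans lt_v_m; rewrite proper_card ?properC.
Qed.

Lemma n_comp_clade_graph : n_comp e V = #|H1 :&: H2|.
Proof.
rewrite -(card_imset _ (@inl_inj _ {set 'I_n})); apply: n_comp_transversal.
- exact: sym_connect_sym cg_adj_sym.
- exact: cg_vertices_closed.
- by move=> _ /imsetP[C + ->]; rewrite inE mem_cg_vertices_inl => /andP[].
- move=> v /connect_common_clade[C HC vC]; exists (inl C) => //; exact: imset_f.
move=> _ _ /imsetP[C HC ->] /imsetP[D HD ->] CD; congr inl; apply/eqP.
have := closed_connect (cg_adj_below HC) CD; have := closed_connect (cg_adj_below HD) CD.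
by rewrite !inE /= !subxx eqEsubset => -> <-.
Qed.

Lemma card_cg_vertices : #|V| = #|H1| + #|H2|.
Proof.
rewrite -(card_imset H1 (@inl_inj _ {set 'I_n})) -(card_imset H2 (@inr_inj {set 'I_n} _)).
apply/eqP.
rewrite (leq_card_setU _ _).2 disjoint_subset; apply/subsetP => _ /imsetP[C _ ->].
by rewrite !inE; apply/imsetP => -[D _].
Qed.

Lemma clade_graph_rankE : clade_graph_rank H1 H2 = #|H1 :|: H2|.
Proof. by rewrite /clade_graph_rank n_comp_clade_graph card_cg_vertices -cardsUI addnK. Qed.
End CladeGraph.

Local Open Scope ring_scope.

Section Cones.
Variables (R : realType) (n : nat).
Implicit Types (H F : {set {set 'I_n}}) (C D : {set 'I_n}).

(* Negated so that it lies in K_T: the weights -[D ⊆ C] increase toward the root. *)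
Definition clade_vec C : dissim R n := [ffun p => if pair_set p \subset C then -1 else 0].
Definition clade_vecs F := [seq clade_vec C | C <- enum F].

Definition mrca_vec H C : dissim R n := [ffun p => (cladeof H (pair_set p) == C)%:R].
Definition mrca_vecs H := [seq mrca_vec H C | C <- enum H].

Lemma K_T0 H : K_T H (0 : dissim R n).
Proof. by exists (fun=> 0); split=> // p; rewrite ffunE. Qed.

Lemma clade_vec_K_T H C : C \in H -> K_T H (clade_vec C).
Proof.
move=> HC; exists (fun D => if D \subset C then -1 else 0); split=> [A B _ _ sAB | p].
  by have [/(subset_trans sAB)-> // | _] := boolP (B \subset C); case: ifP; rewrite ?lerN10.
by rewrite ffunE cladeof_subE.
Qed.

Lemma free_clade_vecs F :
  (forall C, C \in F -> exists p, pins F C (pair_set p)) -> free (clade_vecs F).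
Proof.
have [m] := ubnP #|F|; elim: m F => // m IH F F_lt_m pinF.
have [-> | [C0 FC0]] := set_0Vmem F; first by rewrite /clade_vecs enum_set0 nil_free.
have [C FC maxC] := arg_maxnP (fun C => #|C|) FC0; have {}FC : C \in F := FC.
rewrite /clade_vecs (perm_free (perm_map _ (perm_enum_setD1 FC))) /= free_cons.
apply/andP; split; last first.
  apply: IH => [|D /setD1P[_ FD]]; first by rewrite (cardsD1 C) FC add1n ltnS in F_lt_m.
  by have [p [pD pinD]] := pinF D FD; exists p; split=> // D' /setD1P[_ /pinD].
have [p [pC pinC]] := pinF C FC.
have vanish_p : {in clade_vecs (F :\ C), forall v : dissim R n, v p = 0}.
  move=> _ /mapP[D + ->]; rewrite mem_enum => /setD1P[DC FD]; rewrite ffunE.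
  case: ifP => // pD; case/eqP: DC; apply/eqP.
  by rewrite eq_sym eqEcard pinC //=; apply: maxC.
apply: contraTN (_ : clade_vec C p != 0) => [/(span_ffun_eq0 vanish_p)->|].
  by rewrite eqxx.
by rewrite ffunE pC oppr_eq0 oner_eq0.
Qed.

Lemma free_clade_vecsU H1 H2 :
  is_rooted_tree H1 -> is_rooted_tree H2 -> free (clade_vecs (H1 :|: H2)).
Proof.
move=> t1 t2; apply: free_clade_vecs => C /setUP HC.
apply: exists_pinning_pair; try exact: rooted_tree_laminar.
by case: HC; [apply: clade_card_gt1 t1 | apply: clade_card_gt1 t2].
Qed.

Lemma sub_clade_vecs F F' : F \subset F' -> (<<clade_vecs F>> <= <<clade_vecs F'>>)%VS.
Proof.
move=> sFF'; apply: sub_span => _ /mapP[C FC ->].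
by rewrite map_f // mem_enum (subsetP sFF') // -mem_enum.
Qed.

Lemma mrca_comb_eval H (P : pred {set 'I_n}) (f : {set 'I_n} -> R) p :
  (\sum_(D | P D) f D *: mrca_vec H D) p =
  if P (cladeof H (pair_set p)) then f (cladeof H (pair_set p)) else 0.
Proof.
set c := cladeof H (pair_set p).
rewrite sum_ffunE (eq_bigr (fun D => if c == D then f D else 0)) => [|D _]; last first.
  by rewrite !ffunE; case: eqP => _; [exact: mulr1 | exact: mulr0].
rewrite -big_mkcondr; case: ifP => Pc; [rewrite (big_pred1 c) | rewrite big_pred0] => // D;
  by rewrite /= eq_sym; case: eqVneq => [-> | _]; rewrite ?Pc ?andbF.
Qed.

Lemma mrca_comb_span H (P : pred {set 'I_n}) (f : {set 'I_n} -> R) :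
  (forall D, P D -> D \in H) -> \sum_(D | P D) f D *: mrca_vec H D \in <<mrca_vecs H>>%VS.
Proof.
move=> PH; apply: memv_suml => D PD; apply/memvZ/memv_span.
by rewrite map_f // mem_enum PH.
Qed.

Lemma K_T_mrca_span H d : is_rooted_tree H -> K_T H d -> d \in <<mrca_vecs H>>%VS.
Proof.
move=> tH [w [_ dw]].
have -> : d = \sum_(C | C \in H) w C *: mrca_vec H C.
  by apply/ffunP => p; rewrite mrca_comb_eval cladeof_in ?pair_set_neq0 ?dw.
exact: mrca_comb_span.
Qed.

Lemma clade_vec_mrca_span H C :
  is_rooted_tree H -> C \in H -> clade_vec C \in <<mrca_vecs H>>%VS.
Proof.
move=> tH HC.
have -> : clade_vec C = \sum_(D | (D \in H) && (D \subset C)) (-1) *: mrca_vec H D.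
  apply/ffunP => p; rewrite mrca_comb_eval cladeof_in ?pair_set_neq0 //=.
  by rewrite cladeof_subE // ffunE.
by apply: mrca_comb_span => D /andP[].
Qed.

Lemma span_clade_vecs H : is_rooted_tree H -> <<clade_vecs H>>%VS = <<mrca_vecs H>>%VS.
Proof.
move=> tH; have free_H : free (clade_vecs H) by rewrite -[H]setUid free_clade_vecsU.
apply/eqP; rewrite eqEdim (eqP free_H) size_map; apply/andP; split.
  by apply/span_subvP => _ /mapP[C + ->]; rewrite mem_enum; apply: clade_vec_mrca_span.
by apply: leq_trans (dim_span _) _; rewrite size_map.
Qed.

Lemma K_T_span H d : is_rooted_tree H -> K_T H d -> d \in <<clade_vecs H>>%VS.
Proof. by move=> tH; rewrite span_clade_vecs //; apply: K_T_mrca_span. Qed.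
End Cones.

Unset Implicit Arguments.

Theorem proposition3p7 (R : realType) (n : nat) (H1 H2 : {set {set 'I_n}}) :
  is_rooted_tree H1 -> is_rooted_tree H2 ->
  has_dim (minkowski_sum (@K_T R n H1) (@K_T R n H2)) (clade_graph_rank H1 H2) /\
  clade_graph_rank H1 H2 = #|H1 :|: H2|.
Proof.
move=> t1 t2; rewrite clade_graph_rankE //; split=> //.
exists (clade_vecs R (H1 :|: H2)); split.
- move=> _ /mapP[C + ->]; rewrite mem_enum => /setUP[] HC.
  + exists (clade_vec R C), 0; split; [exact: clade_vec_K_T | exact: K_T0 | by rewrite addr0].
  + exists 0, (clade_vec R C); split; [exact: K_T0 | exact: clade_vec_K_T | by rewrite add0r].
- move=> _ [a [b [Ka Kb ->]]]; apply: memvD.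
  + exact: subvP (sub_clade_vecs R (subsetUl H1 H2)) _ (K_T_span t1 Ka).
  + exact: subvP (sub_clade_vecs R (subsetUr H1 H2)) _ (K_T_span t2 Kb).
- by rewrite (eqP (free_clade_vecsU R t1 t2)) size_map -cardE.
Qed.
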